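(* Let $\Gamma$ be a symmetric bimatrix game. If $\Gamma$ has a Nash equilibrium that is not symmetric, i.e., $\mathrm{Nash}_{\mathrm{sym}}(\Gamma)\subsetneq\mathrm{Nash}(\Gamma)$, then $\mathrm{XE}_{\mathrm{sym}}(\Gamma)\subsetneq\mathrm{CE}_{\mathrm{sym}}(\Gamma)$.
   Context: A symmetric bimatrix game: two players with the same finite strategy set $C_1$ ($|C_1|=m\ge2$) and utilities with $u_1(s_1,s_2)=u_2(s_2,s_1)$. $\mathrm{Nash}(\Gamma)$ is the set of mixed Nash equilibria $(\pi_1,\pi_2)$; $\mathrm{Nash}_{\mathrm{sym}}(\Gamma)$ those with $\pi_1=\pi_2$. Distributions on $C_1\times C_1$ are $m\times m$ nonnegative matrices summing to one. A correlated equilibrium is a distribution $\pi$ such that for each player $i$ and all $s_i,t_i$, $\sum_{s_{-i}}[u_i(t_i,s_{-i})-u_i(s)]\pi(s)\le0$. $\mathrm{CE}_{\mathrm{sym}}(\Gamma)$ is the set of correlated equilibria that are symmetric matrices, and $\mathrm{XE}_{\mathrm{sym}}(\Gamma)$ (exchangeable equilibria) is the set of correlated equilibria lying in $\mathrm{conv}\{xx^T:x\text{ a probability vector on }C_1\}$. *)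

From mathcomp Require Import all_boot all_order all_algebra.
Set Implicit Arguments. Unset Strict Implicit. Unset Printing Implicit Defensive.
Import Order.TTheory GRing.Theory Num.Theory.
Local Open Scope ring_scope.

(* A symmetric bimatrix game with strategy set 'I_m for both players is given by
   u : 'I_m -> 'I_m -> R, the utility of player 1: u1 (s1,s2) = u s1 s2;
   player 2's utility is u2 (s1,s2) = u s2 s1 (so u1(s1,s2) = u2(s2,s1)). *)

Section Game.
Variables (R : realFieldType) (m : nat).
Implicit Types (u : 'I_m -> 'I_m -> R).

Definition u1 u (s1 s2 : 'I_m) : R := u s1 s2.
Definition u2 u (s1 s2 : 'I_m) : R := u s2 s1.

Definition is_prob (x : 'I_m -> R) : Prop :=
  (forall i, 0 <= x i) /\ \sum_i x i = 1.

Definition is_dist (pi : 'M[R]_m) : Prop :=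
  (forall i j, 0 <= pi i j) /\ \sum_i \sum_j pi i j = 1.

Definition is_Nash u (p1 p2 : 'I_m -> R) : Prop :=
  [/\ is_prob p1, is_prob p2,
      (forall t : 'I_m,
         \sum_s1 \sum_s2 p1 s1 * p2 s2 * u1 u t s2
           <= \sum_s1 \sum_s2 p1 s1 * p2 s2 * u1 u s1 s2) &
      (forall t : 'I_m,
         \sum_s1 \sum_s2 p1 s1 * p2 s2 * u2 u s1 t
           <= \sum_s1 \sum_s2 p1 s1 * p2 s2 * u2 u s1 s2)].

Definition is_CE u (pi : 'M[R]_m) : Prop :=
  [/\ is_dist pi,
      (forall s1 t1 : 'I_m,
         \sum_s2 (u1 u t1 s2 - u1 u s1 s2) * pi s1 s2 <= 0) &
      (forall s2 t2 : 'I_m,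
         \sum_s1 (u2 u s1 t2 - u2 u s1 s2) * pi s1 s2 <= 0)].

Definition CE_sym u (pi : 'M[R]_m) : Prop := is_CE u pi /\ pi^T = pi.

Definition in_conv_xxT (pi : 'M[R]_m) : Prop :=
  exists (k : nat) (lam : 'I_k -> R) (x : 'I_k -> 'I_m -> R),
    [/\ forall l, 0 <= lam l, \sum_l lam l = 1,
        forall l, is_prob (x l) &
        pi = \sum_l lam l *: \matrix_(i, j) (x l i * x l j)].

Definition XE_sym u (pi : 'M[R]_m) : Prop := is_CE u pi /\ in_conv_xxT pi.

End Game.

From mathcomp Require Import all_boot all_order all_algebra.
From mathcomp Require Import ring lra.
Set Implicit Arguments. Unset Strict Implicit. Unset Printing Implicit Defensive.
Import Order.TTheory GRing.Theory Num.Theory.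
Local Open Scope ring_scope.

(* If (p, q) is a Nash equilibrium, every pure strategy in the support of p
   (resp. q) is a best response, so the symmetrization (p q^T + q p^T) / 2 is a
   symmetric correlated equilibrium: each recommendation is a best reply to the
   conditional belief it induces.  A matrix in conv {x x^T} is positive
   semidefinite, whereas for p <> q the matrix (p q^T + q p^T) / 2 is not:
   choosing i with q i < p i and j with p j < q j, its quadratic form at
   (p j + q j) e_i - (p i + q i) e_j equals -(p i q j - q i p j)^2 < 0. *)

Section SymmetricGame.
Variables (R : realFieldType) (m : nat).
Implicit Types (u : 'I_m -> 'I_m -> R) (p q x : 'I_m -> R) (pi : 'M[R]_m).

Lemma eq_sum_neq_exists_gt p q k :
  \sum_i p i = \sum_i q i -> p k <> q k -> exists i, q i < p i.
Proof.
move=> Spq pqk; case: (boolP [exists i, q i < p i]) => [/existsP // | ].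
rewrite negb_exists => /forallP qp; exfalso; apply: pqk; apply/eqP.
have le_pq i : p i <= q i by rewrite leNgt; apply: qp.
have : \sum_i (q i - p i) == 0 by rewrite sumrB Spq subrr.
rewrite psumr_eq0 => [/allP/(_ k (mem_index_enum _)) | i _]; last first.
  by rewrite subr_ge0.
by rewrite subr_eq0 eq_sym.
Qed.

Lemma best_response_support p f :
  is_prob p -> (forall t, f t <= \sum_s p s * f s) ->
  forall s t, p s * (f t - f s) <= 0.
Proof.
move=> [p_ge0 p_sum] f_le s t; set E := \sum_s p s * f s.
have gap_ge0 s' : 0 <= p s' * (E - f s') by rewrite mulr_ge0 // subr_ge0.
have : \sum_s' p s' * (E - f s') == 0.
  by rewrite (eq_bigr _ (fun i _ => mulrBr _ _ _)) sumrB -mulr_suml p_sum mul1r subrr.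
rewrite psumr_eq0 // => /allP/(_ s (mem_index_enum _))/eqP gap_s.
have -> : p s * (f t - f s) = p s * (f t - E) + p s * (E - f s) by ring.
by rewrite gap_s addr0 mulr_ge0_le0 // subr_le0.
Qed.

Definition payoff u q (s : 'I_m) : R := \sum_j q j * u s j.

Lemma Nash_best_response u p q :
  is_Nash u p q ->
  (forall t, payoff u q t <= \sum_s p s * payoff u q s) /\
  (forall t, payoff u p t <= \sum_s q s * payoff u p s).
Proof.
case=> [[_ p_sum] [_ q_sum] N1 N2]; split=> t.
- have := N1 t; congr (_ <= _); last first.
    by apply: eq_bigr => s1 _; rewrite mulr_sumr; apply: eq_bigr => s2 _; rewrite mulrA.
  rewrite -[RHS]mul1r -p_sum mulr_suml; apply: eq_bigr => s1 _.
  by rewrite mulr_sumr; apply: eq_bigr => s2 _; rewrite mulrA.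
- have := N2 t; rewrite exchange_big [X in _ <= X]exchange_big.
  congr (_ <= _); last first.
    apply: eq_bigr => s2 _; rewrite mulr_sumr; apply: eq_bigr => s1 _.
    by rewrite /u2 mulrA (mulrC (q s2)).
  rewrite -[RHS]mul1r -q_sum mulr_suml; apply: eq_bigr => s2 _.
  by rewrite mulr_sumr; apply: eq_bigr => s1 _; rewrite /u2 mulrA (mulrC (q s2)).
Qed.

Definition sym_prod p q : 'M[R]_m := \matrix_(i, j) ((p i * q j + q i * p j) / 2).

Lemma sym_prod_tr p q : (sym_prod p q)^T = sym_prod p q.
Proof. by apply/matrixP => i j; rewrite !mxE; ring. Qed.

Lemma sym_prod_dist p q : is_prob p -> is_prob q -> is_dist (sym_prod p q).
Proof.
move=> [p_ge0 p_sum] [q_ge0 q_sum]; split=> [i j | ].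
  by rewrite mxE divr_ge0 // addr_ge0 // mulr_ge0.
under eq_bigr => i _ do under eq_bigr => j _ do rewrite mxE.
under eq_bigr => i _ do rewrite -mulr_suml big_split /= -!mulr_sumr p_sum q_sum.
by rewrite -mulr_suml big_split /= -!mulr_suml p_sum q_sum; field.
Qed.

Lemma sym_prod_deviation u p q s t :
  \sum_j (u t j - u s j) * sym_prod p q s j =
  (p s * (payoff u q t - payoff u q s) + q s * (payoff u p t - payoff u p s)) / 2.
Proof.
rewrite /payoff -!sumrB !mulr_sumr -big_split /= mulr_suml.
by apply: eq_bigr => j _; rewrite mxE; ring.
Qed.

Lemma sym_prod_CE u p q : is_Nash u p q -> is_CE u (sym_prod p q).
Proof.
move=> N; have [Pp Pq _ _] := N; have [BRq BRp] := Nash_best_response N.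
have dev_le0 s t : \sum_j (u t j - u s j) * sym_prod p q s j <= 0.
  rewrite sym_prod_deviation.
  have := best_response_support Pp BRq s t; have := best_response_support Pq BRp s t.
  lra.
split; [exact: sym_prod_dist | exact: dev_le0 | move=> s t].
have pi_sym i j : sym_prod p q i j = sym_prod p q j i by rewrite !mxE; ring.
under eq_bigr => j _ do rewrite /u2 pi_sym.
exact: dev_le0.
Qed.

Lemma conv_xxT_tr pi : in_conv_xxT pi -> pi^T = pi.
Proof.
case=> k [lam [x [_ _ _ ->]]]; apply/matrixP => i j.
by rewrite mxE !summxE; apply: eq_bigr => l _; rewrite !mxE (mulrC (x l i)).
Qed.

Lemma conv_xxT_psd2 pi i j a b :
  in_conv_xxT pi ->
  0 <= a * a * pi i i - a * b * pi i j - a * b * pi j i + b * b * pi j j.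
Proof.
case=> k [lam [x [lam_ge0 _ _ ->]]].
have entry i' j' : (\sum_l lam l *: \matrix_(i, j) (x l i * x l j)) i' j' =
                   \sum_l lam l * (x l i' * x l j').
  by rewrite summxE; apply: eq_bigr => l _; rewrite !mxE.
rewrite !entry !mulr_sumr -!sumrB -big_split /=; apply: sumr_ge0 => l _.
rewrite (_ : _ + _ = lam l * (a * x l i - b * x l j) ^+ 2); last by ring.
by rewrite mulr_ge0 ?sqr_ge0.
Qed.

Lemma sym_prod_not_conv_xxT p q :
  is_prob p -> is_prob q -> (exists k, p k <> q k) -> ~ in_conv_xxT (sym_prod p q).
Proof.
move=> [p_ge0 p_sum] [q_ge0 q_sum] [k pqk] conv.
have [i qpi] := eq_sum_neq_exists_gt (etrans p_sum (esym q_sum)) pqk.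
have [j pqj] : exists j, p j < q j.
  by apply: (eq_sum_neq_exists_gt (etrans q_sum (esym p_sum))) => /esym/pqk.
have minor_gt0 : 0 < p i * q j - q i * p j.
  rewrite subr_gt0 (le_lt_trans (ler_wpM2l (q_ge0 i) (ltW pqj))) //.
  by rewrite ltr_pM2r // (le_lt_trans (p_ge0 j)).
have := conv_xxT_psd2 i j (p j + q j) (p i + q i) conv.
rewrite !mxE (_ : _ + _ = - (p i * q j - q i * p j) ^+ 2); last by field.
have := exprn_gt0 2 minor_gt0; lra.
Qed.

End SymmetricGame.

Theorem theorem3p5 (R : realFieldType) (m : nat) (hm : (2 <= m)%N)
    (u : 'I_m -> 'I_m -> R) :
  (exists p1 p2 : 'I_m -> R, is_Nash u p1 p2 /\ exists i, p1 i <> p2 i) ->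
  (forall pi : 'M[R]_m, XE_sym u pi -> CE_sym u pi) /\
  (exists pi : 'M[R]_m, CE_sym u pi /\ ~ XE_sym u pi).
Proof.
move=> [p1 [p2 [N p12]]]; split.
  by move=> pi [CE conv]; split; last exact: conv_xxT_tr.
have [P1 P2 _ _] := N.
exists (sym_prod p1 p2); split; first by split; [exact: sym_prod_CE | exact: sym_prod_tr].
by case=> _; apply: sym_prod_not_conv_xxT.
Qed.
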